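(* Let $G$ be a group, $n\ge 2$, $X=\{x_1,\dots,x_n\}$, fix a function $X\to G$, and let $(\mathcal X_l)_{l\ge1}$ be a non-backtracking random walk on $(G,X)$. Then the Markov chain $(\mathcal X_l)$ on $\Omega=G\times\{\pm1,\dots,\pm n\}$ is irreducible if and only if $G$ is generated by (the images of) $x_1,\dots,x_n$ but $G$ is not a free group freely generated by $x_1,\dots,x_n$ (i.e. the induced homomorphism $F(X)\to G$ is surjective but not injective).
   Context: Let $G$ be a group, $X=\{x_1,\dots,x_n\}$ a set with $n\ge 2$, and fix a function $X\to G$; we identify each $x_i$ with its image in $G$. Let $\Omega=G\times\{\pm1,\pm2,\dots,\pm n\}$, with elements written $(g,\epsilon i)$, $g\in G$, $\epsilon=\pm1$, $i\in\{1,\dots,n\}$. A non-backtracking random walk on $(G,X)$ is a Markov chain $(\mathcal X_l)_{l\ge1}$ on $\Omega$ with transition probabilities $\mathbb P(\mathcal X_{l+1}=(g,\epsilon i)\mid \mathcal X_l=(h,\epsilon' j))=\alpha_{\epsilon' j,\epsilon i}$ if $g=hx_i^{\epsilon}$ and $\epsilon i\neq -\epsilon' j$, and $=0$ otherwise, where the $\alpha_{\epsilon' j,\epsilon i}$ are positive constants with $\sum_{\epsilon i\neq-\epsilon' j}\alpha_{\epsilon' j,\epsilon i}=1$ for each $\epsilon' j$; and with initial distribution $\mathbb P(\mathcal X_1=(g,\epsilon i))=\beta_{\epsilon i}$ if $g=x_i^{\epsilon}$ and $0$ otherwise, for positive constants $\beta_{\epsilon i}$ summing to $1$. Irreducibility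 and period refer to the Markov chain on the full state space $\Omega$. *)

From Stdlib Require Import Reals List Relations ClassicalEpsilon.
Import ListNotations.
Open Scope R_scope.

Record IsGroup (G : Type) (mul : G -> G -> G) (one : G) (inv : G -> G) : Prop := {
  grp_assoc : forall a b c, mul a (mul b c) = mul (mul a b) c;
  grp_one_l : forall a, mul one a = a;
  grp_one_r : forall a, mul a one = a;
  grp_inv_l : forall a, mul (inv a) a = one;
  grp_inv_r : forall a, mul a (inv a) = one }.

(** A letter [(true, i)] stands for [+(i+1)], i.e. x_{i+1}; [(false, i)] for [-(i+1)],
    i.e. x_{i+1}^{-1}.  Indices are 0-based: valid letters have [i < n]. *)
Definition letter := (bool * nat)%type.
Definition valid_letter (n : nat) (a : letter) : Prop := (snd a < n)%nat.
Definition linv (a : letter) : letter := (negb (fst a), snd a).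

Definition letter_eqb (a b : letter) : bool :=
  Bool.eqb (fst a) (fst b) && Nat.eqb (snd a) (snd b).

Definition letters (n : nat) : list letter :=
  map (fun i => (true, i)) (seq 0 n) ++ map (fun i => (false, i)) (seq 0 n).

Definition sumR (l : list R) : R := fold_right Rplus 0 l.

Section Walk.
Context {G : Type} (mul : G -> G -> G) (one : G) (inv : G -> G) (x : nat -> G).

Definition ev_letter (a : letter) : G := if fst a then x (snd a) else inv (x (snd a)).

Definition ev_word (w : list letter) : G := fold_right mul one (map ev_letter w).

Definition nbrw_P (n : nat) (alpha : letter -> letter -> R)
    (s t : G * letter) : R :=
  let (h, a) := s in let (g, b) := t in
  if excluded_middle_informative
       (valid_letter n b /\ g = mul h (ev_letter b) /\ b <> linv a)
  then alpha a b else 0.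

Definition nbrw_irreducible (n : nat) (alpha : letter -> letter -> R) : Prop :=
  forall (s t : G * letter), valid_letter n (snd s) -> valid_letter n (snd t) ->
    clos_trans (G * letter) (fun u v => nbrw_P n alpha u v > 0) s t.
End Walk.

Definition valid_word (n : nat) (w : list letter) : Prop := Forall (valid_letter n) w.

Fixpoint reduced (w : list letter) : Prop :=
  match w with
  | a :: ((b :: _) as w') => b <> linv a /\ reduced w'
  | _ => True
  end.

Definition generated_by {G : Type} (mul : G -> G -> G) (one : G) (inv : G -> G)
  (x : nat -> G) (n : nat) : Prop :=
  forall g : G, exists w, valid_word n w /\ ev_word mul one inv x w = g.

(** G is freely generated by x_1,...,x_n: the map F(X) -> G (F(X) realised as the
    set of reduced words over X^{+-1}) is injective. *)
Definition freely_generated_by {G : Type} (mul : G -> G -> G) (one : G) (inv : G -> G)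
  (x : nat -> G) (n : nat) : Prop :=
  forall w1 w2, valid_word n w1 -> valid_word n w2 -> reduced w1 -> reduced w2 ->
    ev_word mul one inv x w1 = ev_word mul one inv x w2 -> w1 = w2.

From Stdlib Require Import Reals List Relations.
From Stdlib Require Import Classical ClassicalEpsilon Lra Lia.
Import ListNotations.
Open Scope R_scope.

(* The positive-probability paths of the walk leaving the state (h, a) are
   exactly the nonempty words w with a w reduced; such a path ends in
   (h * w, last letter of w).  So irreducibility gives, for every g, a path from
   (1, a) to (g, a), i.e. generation, and a closed path at (1, a), i.e. a
   nontrivial reduced relator, which rules out freeness.  Conversely a
   nontrivial reduced relator r provides, from every letter other than the
   inverse of its first letter, a loop back to the same group element.  With
   at least four letters available (n >= 2) these loops can be combined to move
   from any letter to any other letter without changing the group element, and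
   generation then lets the walk reach every state. *)

Lemma last_cons_default {A : Type} (b : A) t d : last (b :: t) d = last t b.
Proof.
  revert b d; induction t as [|c t IH]; intros b d; [reflexivity|].
  change (last (b :: c :: t) d) with (last (c :: t) d). rewrite !IH. reflexivity.
Qed.

Lemma linv_involutive (a : letter) : linv (linv a) = a.
Proof. destruct a as [[] i]; reflexivity. Qed.

Lemma linv_inj (a b : letter) : linv a = linv b -> a = b.
Proof. intro H. rewrite <- (linv_involutive a), <- (linv_involutive b), H. reflexivity. Qed.

Lemma neq_linv (a : letter) : a <> linv a.
Proof. destruct a as [[] i]; unfold linv; simpl; congruence. Qed.

Lemma valid_linv n (a : letter) : valid_letter n a -> valid_letter n (linv a).
Proof. destruct a; exact (fun H => H). Qed.

Lemma valid_last n (b : letter) t : valid_word n (b :: t) -> valid_letter n (last t b).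
Proof.
  revert b; induction t as [|c t IH]; intros b Hv; inversion Hv; subst; [assumption|].
  rewrite last_cons_default. apply IH. assumption.
Qed.

Lemma valid_word_rev_linv n w : valid_word n w -> valid_word n (rev (map linv w)).
Proof.
  intro Hw. apply Forall_rev, Forall_map. exact (Forall_impl _ (valid_linv n) Hw).
Qed.

Lemma exists_valid_letter_avoiding n (Hn : (2 <= n)%nat) (y1 y2 y3 : letter) :
  exists e, valid_letter n e /\ e <> y1 /\ e <> y2 /\ e <> y3.
Proof.
  assert (V : forall b i, (i < 2)%nat -> valid_letter n (b, i))
    by (intros; unfold valid_letter; simpl; lia).
  apply NNPP; intro Hnone.
  assert (K : forall e, valid_letter n e -> e = y1 \/ e = y2 \/ e = y3).
  { intros e He. apply NNPP; intro C; apply Hnone; exists e; tauto. }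
  destruct (K (true, 0%nat) (V true 0%nat ltac:(lia))) as [K1|[K1|K1]];
  destruct (K (false, 0%nat) (V false 0%nat ltac:(lia))) as [K2|[K2|K2]];
  destruct (K (true, 1%nat) (V true 1%nat ltac:(lia))) as [K3|[K3|K3]];
  destruct (K (false, 1%nat) (V false 1%nat ltac:(lia))) as [K4|[K4|K4]]; congruence.
Qed.

Lemma reduced_tail (a : letter) w : reduced (a :: w) -> reduced w.
Proof. destruct w; simpl; tauto. Qed.

Lemma reduced_app_cons (u : list letter) a b v :
  reduced (u ++ [a]) -> reduced (b :: v) -> b <> linv a -> reduced (u ++ a :: b :: v).
Proof.
  induction u as [|c u IH]; intros Hu Hv Hba; [split; assumption|].
  destruct u as [|d u]; simpl in Hu |- *; split; try tauto; apply IH; tauto.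
Qed.

Lemma reduced_rev_linv w : reduced w -> reduced (rev (map linv w)).
Proof.
  induction w as [|a w IH]; intro Hw; [exact I|].
  destruct w as [|b w]; [exact I|].
  destruct Hw as [Hba Hw].
  change (reduced ((rev (map linv w) ++ [linv b]) ++ [linv a])).
  rewrite <- app_assoc. apply reduced_app_cons; [exact (IH Hw) | exact I |].
  rewrite linv_involutive. intro E; apply Hba; symmetry; exact E.
Qed.

Section NonBacktrackingWalk.

Variables (G : Type) (mul : G -> G -> G) (one : G) (inv : G -> G).
Hypothesis HG : IsGroup G mul one inv.
Variables (n : nat) (x : nat -> G).

Let mulA := grp_assoc _ _ _ _ HG.
Let mul1g := grp_one_l _ _ _ _ HG.
Let mulg1 := grp_one_r _ _ _ _ HG.
Let mulVg := grp_inv_l _ _ _ _ HG.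
Let mulgV := grp_inv_r _ _ _ _ HG.

Local Notation ev := (ev_word mul one inv x).
Local Notation evl := (ev_letter inv x).

Lemma mul_eq_one_inv a b : mul a b = one -> b = inv a.
Proof. intro H. rewrite <- (mul1g b), <- (mulVg a), <- mulA, H, mulg1. reflexivity. Qed.

Lemma inv_involutive a : inv (inv a) = a.
Proof. symmetry. apply mul_eq_one_inv, mulVg. Qed.

Lemma inv_mul a b : inv (mul a b) = mul (inv b) (inv a).
Proof.
  symmetry. apply mul_eq_one_inv.
  rewrite <- mulA, (mulA b), mulgV, mul1g, mulgV. reflexivity.
Qed.

Lemma mul_cancel_l a b c : mul a b = mul a c -> b = c.
Proof. intro H. rewrite <- (mul1g b), <- (mul1g c), <- (mulVg a), <- !mulA, H. reflexivity. Qed.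

Lemma ev_letter_linv a : evl (linv a) = inv (evl a).
Proof. destruct a as [[] i]; unfold ev_letter, linv; simpl; [reflexivity|]. now rewrite inv_involutive. Qed.

Lemma ev_word_cons a w : ev (a :: w) = mul (evl a) (ev w).
Proof. reflexivity. Qed.

Lemma ev_word_single a : ev [a] = evl a.
Proof. apply mulg1. Qed.

Lemma ev_word_app u v : ev (u ++ v) = mul (ev u) (ev v).
Proof.
  induction u as [|a u IH]; [symmetry; apply mul1g|].
  simpl app. rewrite !ev_word_cons, IH, mulA. reflexivity.
Qed.

Lemma ev_word_rev_linv w : ev (rev (map linv w)) = inv (ev w).
Proof.
  induction w as [|a w IH]; [apply mul_eq_one_inv, mul1g|].
  simpl. rewrite ev_word_app, IH, ev_word_single, ev_letter_linv, <- inv_mul. reflexivity.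
Qed.

Definition relator (w : list letter) : Prop :=
  w <> nil /\ valid_word n w /\ reduced w /\ ev w = one.

(* Two distinct reduced words with the same value give, after cancelling their
   common prefix a t1 = b t2 with a <> b, the reduced relator t1^-1 a^-1 b t2. *)
Lemma free_iff_no_relator :
  freely_generated_by mul one inv x n <-> ~ exists w, relator w.
Proof.
  split.
  - intros Hfree [w [Hne [Hw [Hr Hone]]]].
    apply Hne, Hfree; [exact Hw | constructor | exact Hr | exact I | exact Hone].
  - intros Hno w1; induction w1 as [|a t1 IH]; intros [|b t2] Hv1 Hv2 Hr1 Hr2 Heq.
    + reflexivity.
    + exfalso; apply Hno. exists (b :: t2). repeat split; auto. discriminate.
    + exfalso; apply Hno. exists (a :: t1). repeat split; auto. discriminate.
    + inversion Hv1; inversion Hv2; subst.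
      destruct (classic (a = b)) as [<- | Nab].
      * f_equal. apply IH; eauto using reduced_tail.
        apply (mul_cancel_l (evl a)). exact Heq.
      * exfalso; apply Hno.
        assert (Hsplit : rev (map linv t1) ++ linv a :: b :: t2
                         = rev (map linv (a :: t1)) ++ b :: t2)
          by (simpl; rewrite <- app_assoc; reflexivity).
        exists (rev (map linv t1) ++ linv a :: b :: t2). repeat split.
        -- intro E. apply app_eq_nil in E. destruct E. discriminate.
        -- rewrite Hsplit. apply Forall_app. split; [apply valid_word_rev_linv|]; assumption.
        -- apply reduced_app_cons; [exact (reduced_rev_linv _ Hr1) | exact Hr2 |].
           rewrite linv_involutive. congruence.
        -- rewrite Hsplit, ev_word_app, ev_word_rev_linv, Heq. apply mulVg.
Qed.

Variable alpha : letter -> letter -> R.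

Definition nbrw_step (u v : G * letter) : Prop := nbrw_P mul inv x n alpha u v > 0.

Lemma nbrw_step_inv h a g b : nbrw_step (h, a) (g, b) ->
  valid_letter n b /\ g = mul h (evl b) /\ b <> linv a.
Proof.
  unfold nbrw_step, nbrw_P; cbv beta iota.
  destruct (excluded_middle_informative _) as [H|_]; [intros _; exact H | lra].
Qed.

Lemma nbrw_path_word s t : clos_trans _ nbrw_step s t ->
  exists c w, valid_word n (c :: w) /\ reduced (snd s :: c :: w) /\
    fst t = mul (fst s) (ev (c :: w)) /\ snd t = last w c.
Proof.
  intro H; apply clos_trans_t1n in H.
  induction H as [[h a] [g b] H | [h a] [h1 a1] t H _ [c [w [Hv [Hr [Ht Hlast]]]]]].
  - destruct (nbrw_step_inv _ _ _ _ H) as [Hb [-> Hba]].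
    exists b, []. split; [constructor; [exact Hb | constructor]|].
    split; [split; [exact Hba | exact I]|]. split; [|reflexivity].
    cbn [fst]. rewrite ev_word_single. reflexivity.
  - destruct (nbrw_step_inv _ _ _ _ H) as [Ha1 [-> Ha1a]].
    exists a1, (c :: w). split; [constructor; assumption|].
    split; [split; assumption|]. split.
    + cbn [fst] in Ht |- *. rewrite Ht, (ev_word_cons a1), mulA. reflexivity.
    + rewrite Hlast, last_cons_default. reflexivity.
Qed.

Lemma irreducible_generated_by : (0 < n)%nat ->
  nbrw_irreducible mul inv x n alpha -> generated_by mul one inv x n.
Proof.
  intros Hn Hirr g.
  destruct (nbrw_path_word _ _ (Hirr (one, (true, O)) (g, (true, O)) Hn Hn))
    as [c [w [Hv [_ [Hg _]]]]].
  exists (c :: w). split; [exact Hv|]. cbn [fst] in Hg. rewrite Hg, mul1g. reflexivity.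
Qed.

Lemma irreducible_relator : (0 < n)%nat ->
  nbrw_irreducible mul inv x n alpha -> exists w, relator w.
Proof.
  intros Hn Hirr.
  destruct (nbrw_path_word _ _ (Hirr (one, (true, O)) (one, (true, O)) Hn Hn))
    as [c [w [Hv [Hr [Hone _]]]]].
  exists (c :: w). cbn [fst] in Hone. rewrite mul1g in Hone.
  repeat split; [discriminate | exact Hv | exact (reduced_tail _ _ Hr) | auto].
Qed.

Hypothesis alpha_pos : forall a b, valid_letter n a -> valid_letter n b ->
  b <> linv a -> alpha a b > 0.

Definition leads (a : letter) (v : G) (b : letter) : Prop :=
  forall h, clos_trans _ nbrw_step (h, a) (mul h v, b).

Lemma leads_trans a v b v' c : leads a v b -> leads b v' c -> leads a (mul v v') c.
Proof. intros H1 H2 h. apply t_trans with (mul h v, b); [apply H1|]. rewrite mulA. apply H2. Qed.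

Lemma leads_letter a b : valid_letter n a -> valid_letter n b -> b <> linv a ->
  leads a (evl b) b.
Proof.
  intros Ha Hb Hba h. apply t_step. unfold nbrw_step, nbrw_P; cbv beta iota.
  destruct (excluded_middle_informative _) as [_|Hc]; [now apply alpha_pos|].
  exfalso; apply Hc; auto.
Qed.

Lemma leads_reduced_word c b t : valid_letter n c -> valid_word n (b :: t) ->
  reduced (c :: b :: t) -> leads c (ev (b :: t)) (last t b).
Proof.
  revert c b; induction t as [|d t IH]; intros c b Hc Hv [Hbc Hr]; inversion Hv; subst.
  - rewrite ev_word_single. apply leads_letter; assumption.
  - rewrite ev_word_cons, last_cons_default.
    apply leads_trans with b; [apply leads_letter | apply IH]; assumption.
Qed.

Lemma leads_one_of_relator b t c : relator (b :: t) -> valid_letter n c ->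
  c <> linv b -> leads c one (last t b).
Proof.
  intros [_ [Hv [Hr Hone]]] Hc Hcb. rewrite <- Hone.
  apply leads_reduced_word; [assumption | assumption | split; [|exact Hr]].
  intro E; apply Hcb; rewrite E, linv_involutive. reflexivity.
Qed.

Section Steering.

Hypothesis n_ge2 : (2 <= n)%nat.
Variables (p l : letter).
Hypothesis valid_l : valid_letter n l.
Hypothesis loop : forall c, valid_letter n c -> c <> p -> leads c one l.

(* Step e, loop back to the same element, then step e^-1. *)
Lemma leads_one_linv_avoiding a e : valid_letter n a -> valid_letter n e ->
  e <> linv a -> e <> p -> e <> l -> leads a one (linv e).
Proof.
  intros Ha He Hea Hep Hel.
  assert (Hback : leads l (evl (linv e)) (linv e)).
  { apply leads_letter; [exact valid_l | apply valid_linv, He |].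
    intro E; apply Hel, linv_inj, E. }
  pose proof (leads_trans _ _ _ _ _
    (leads_trans _ _ _ _ _ (leads_letter a e Ha He Hea) (loop e He Hep)) Hback) as H.
  rewrite mulg1, ev_letter_linv, mulgV in H. exact H.
Qed.

Lemma leads_one_linv a e : valid_letter n a -> valid_letter n e ->
  e <> p -> e <> l -> leads a one (linv e).
Proof.
  intros Ha He Hep Hel. destruct (classic (e = linv a)) as [Hea|Hea];
    [|apply leads_one_linv_avoiding; assumption].
  destruct (exists_valid_letter_avoiding n n_ge2 p l (linv a)) as [e' [He' [N1 [N2 N3]]]].
  rewrite <- (mul1g one). apply leads_trans with (linv e').
  - apply leads_one_linv_avoiding; assumption.
  - apply leads_one_linv_avoiding; [apply valid_linv; exact He' | exact He | | exact Hep | exact Hel].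
    rewrite linv_involutive. congruence.
Qed.

(* Reach b by stepping b^-1 then b, each preceded by a detour of value one. *)
Lemma leads_one a b : valid_letter n a -> valid_letter n b -> leads a one b.
Proof.
  intros Ha Hb.
  destruct (exists_valid_letter_avoiding n n_ge2 p l (linv b)) as [e1 [He1 [N1 [N2 N3]]]].
  destruct (exists_valid_letter_avoiding n n_ge2 p l b) as [e2 [He2 [M1 [M2 M3]]]].
  assert (K1 : leads (linv e1) (evl (linv b)) (linv b)).
  { apply leads_letter; [apply valid_linv; exact He1 | apply valid_linv; exact Hb |].
    rewrite linv_involutive. intro E; apply N3; rewrite E; reflexivity. }
  assert (K2 : leads (linv e2) (evl b) b).
  { apply leads_letter; [apply valid_linv; exact He2 | exact Hb |].
    rewrite linv_involutive. intro E; apply M3; symmetry; exact E. }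
  pose proof (leads_trans _ _ _ _ _
    (leads_trans _ _ _ _ _ (leads_trans _ _ _ _ _ (leads_one_linv a e1 Ha He1 N1 N2) K1)
       (leads_one_linv (linv b) e2 (valid_linv _ _ Hb) He2 M1 M2)) K2) as H.
  rewrite mul1g, mulg1, ev_letter_linv, mulVg in H. exact H.
Qed.

End Steering.

Lemma leads_word u a b :
  (forall a b, valid_letter n a -> valid_letter n b -> leads a one b) ->
  valid_word n u -> valid_letter n a -> valid_letter n b -> leads a (ev u) b.
Proof.
  intros Hall. revert a; induction u as [|c u IH]; intros a Hu Ha Hb; [apply Hall; assumption|].
  inversion Hu; subst.
  rewrite ev_word_cons, <- (mul1g (evl c)).
  apply leads_trans with c; [apply leads_trans with c|apply IH]; auto.
  apply leads_letter, neq_linv; assumption.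
Qed.

Lemma irreducible_of_relator w : (2 <= n)%nat -> generated_by mul one inv x n ->
  relator w -> nbrw_irreducible mul inv x n alpha.
Proof.
  intros Hn Hgen Hrel. destruct w as [|b t]; [now destruct Hrel|].
  pose proof Hrel as [_ [Hv _]].
  assert (Hall := leads_one Hn (linv b) (last t b) (valid_last _ _ _ Hv)
                    (fun c Hc => leads_one_of_relator b t c Hrel Hc)).
  intros [h a] [g c] Ha Hc. destruct (Hgen (mul (inv h) g)) as [u [Hu Heu]].
  pose proof (leads_word u a c Hall Hu Ha Hc h) as H.
  rewrite Heu, mulA, mulgV, mul1g in H. exact H.
Qed.

End NonBacktrackingWalk.

Theorem mainTheorem1
  (G : Type) (mul : G -> G -> G) (one : G) (inv : G -> G)
  (HG : IsGroup G mul one inv)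
  (n : nat) (Hn : (2 <= n)%nat) (x : nat -> G)
  (alpha : letter -> letter -> R) (beta : letter -> R)
  (Halpha_pos : forall a b, valid_letter n a -> valid_letter n b ->
      b <> linv a -> alpha a b > 0)
  (Halpha_sum : forall a, valid_letter n a ->
      sumR (map (alpha a)
        (filter (fun b => negb (letter_eqb b (linv a))) (letters n))) = 1)
  (Hbeta_pos : forall a, valid_letter n a -> beta a > 0)
  (Hbeta_sum : sumR (map beta (letters n)) = 1) :
  nbrw_irreducible mul inv x n alpha <->
  (generated_by mul one inv x n /\ ~ freely_generated_by mul one inv x n).
Proof.
  assert (Hn0 : (0 < n)%nat) by lia.
  rewrite (free_iff_no_relator _ _ _ _ HG).
  split.
  - intro Hirr. split; [exact (irreducible_generated_by _ _ _ _ HG n x alpha Hn0 Hirr)|].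
    intro Hno; apply Hno. exact (irreducible_relator _ _ _ _ HG n x alpha Hn0 Hirr).
  - intros [Hgen Hrel]. apply NNPP in Hrel. destruct Hrel as [w Hw].
    exact (irreducible_of_relator _ _ _ _ HG n x alpha Halpha_pos w Hn Hgen Hw).
Qed.
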